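(* Let $V$ be a topological real vector space and $C$ a cone in $V$. Assume $X_1,\dots,X_m,Y_1,\dots,Y_n$ are nonempty $C$-antichain-convex subsets of $V$, and put $X=X_1+\dots+X_m$ and $Y=Y_1+\dots+Y_n$. Suppose $\operatorname{int}(X)\neq\emptyset$ and $\operatorname{int}(X)\cap Y=\emptyset$. (1) If $X_1$ is $C$-upward, then $X$ and $Y$ are separated. (2) If $X_1$ is $C$-downward, then $X$ and $Y$ are separated.
   Context: A cone in $V$ is a subset $C$ with $\lambda C\subseteq C$ for all $\lambda>0$ (possibly empty, need not contain $0$). $S\subseteq V$ is $C$-antichain-convex iff for all $x,y\in S$ and $\lambda\in[0,1]$ with $y-x\notin C\cup(-C)$ one has $\lambda x+(1-\lambda)y\in S$. $S$ is $C$-upward iff $S+C\subseteq S$; $C$-downward iff $S-C\subseteq S$. Sums are Minkowski sums. $V^*$ is the space of continuous linear functionals on $V$. $X$ and $Y$ are separated iff there is $f\in V^*\setminus\{0\}$ with $\sup f[X]\le\inf f[Y]$. *)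

From HB Require Import structures.
From mathcomp Require Import all_boot all_order all_algebra.
From mathcomp Require Import all_classical all_reals all_analysis.
Set Implicit Arguments. Unset Strict Implicit. Unset Printing Implicit Defensive.
Import Order.TTheory GRing.Theory Num.Theory.
Local Open Scope classical_set_scope.
Local Open Scope ring_scope.

(* A cone: lambda C `<=` C for all lambda > 0 (possibly empty, need not contain 0). *)
Definition is_cone (R : realType) (V : lmodType R) (C : set V) : Prop :=
  forall (l : R) (c : V), 0 < l -> C c -> C (l *: c).

Definition antichain_convex (R : realType) (V : lmodType R) (C S : set V) : Prop :=
  forall (x y : V) (l : R), S x -> S y -> 0 <= l <= 1 ->
    ~ (C (y - x) \/ [set - c | c in C] (y - x)) ->
    S (l *: x + (1 - l) *: y).

Definition upward (R : realType) (V : lmodType R) (C S : set V) : Prop :=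
  [set s + c | s in S & c in C] `<=` S.

Definition downward (R : realType) (V : lmodType R) (C S : set V) : Prop :=
  [set s - c | s in S & c in C] `<=` S.

Definition minksum2 (R : realType) (V : lmodType R) (A B : set V) : set V :=
  [set a + b | a in A & b in B].

(* Minkowski sum X 0 + X 1 + ... + X (k-1)  (empty sum = [set 0]) *)
Fixpoint minksum (R : realType) (V : lmodType R) (X : nat -> set V) (k : nat) : set V :=
  match k with
  | 0%N => [set 0]
  | k'.+1 => minksum2 (minksum X k') (X k')
  end.

Definition lin_separated (R : realType) (V : topologicalLmodType R) (X Y : set V) : Prop :=
  exists f : {linear V -> R^o},
    continuous (f : V -> R^o) /\ (exists v, f v != 0) /\
    (ereal_sup [set (f x)%:E | x in X] <= ereal_inf [set (f y)%:E | y in Y])%E.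

(* If x, y lie in a C-antichain-convex set S and y - x is in C or -C, then
   every point of the segment [x, y] lies in both S + C and S - C, so a
   C-upward summand absorbs the defect of convexity.  Hence X and int X - Y are
   convex, and the latter avoids 0 and has an algebraic interior point.  Zorn's
   lemma on graphs of partial linear functionals (Hahn-Banach) gives a linear f
   that is nonnegative on the cone generated by int X - Y; f is bounded on a
   neighbourhood of 0, hence continuous, and the inequality passes from int X
   to X along segments.  The downward case is the upward case for -C. *)

From HB Require Import structures.
From mathcomp Require Import all_boot all_order all_algebra.
From mathcomp Require Import all_classical all_reals all_analysis.
From mathcomp Require Import lra.
Import Order.TTheory GRing.Theory Num.Theory.
Local Open Scope classical_set_scope.
Local Open Scope ring_scope.
Set Implicit Arguments. Unset Strict Implicit. Unset Printing Implicit Defensive.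

Section AntichainConvexity.
Variables (R : realType) (V : lmodType R) (C : set V).
Hypothesis Ccone : is_cone C.

Definition is_convex (S : set V) : Prop :=
  forall x y l, S x -> S y -> 0 <= l <= 1 -> S (l *: x + (1 - l) *: y).

Lemma convE_left (l : R) (x y : V) :
  l *: x + (1 - l) *: y = x + (1 - l) *: (y - x).
Proof.
by rewrite scalerBr [(1 - l) *: x]scalerBl scale1r opprB [RHS]addrCA [x + (_ - _)]addrC subrK addrC.
Qed.

Lemma convE_right (l : R) (x y : V) :
  l *: x + (1 - l) *: y = y + l *: (x - y).
Proof.
have := convE_left (1 - l) y x; rewrite opprB addrCA subrr addr0 => <-.
by rewrite addrC.
Qed.

Lemma antichain_convex_conv (B : set V) b b' l :
  antichain_convex C B -> B b -> B b' -> 0 <= l <= 1 ->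
  B (l *: b + (1 - l) *: b') \/
  [set u + c | u in B & c in C] (l *: b + (1 - l) *: b') /\
  [set u - c | u in B & c in C] (l *: b + (1 - l) *: b').
Proof.
move=> Bac Bb Bb' /andP[l0 l1].
have [->|ln1] := eqVneq l 1; first by left; rewrite subrr scale0r addr0 scale1r.
have [->|ln0] := eqVneq l 0; first by left; rewrite subr0 scale0r add0r scale1r.
have lp : 0 < l by rewrite lt_neqAle eq_sym ln0.
have lq : 0 < 1 - l by rewrite subr_gt0 lt_neqAle ln1.
have [[Cbb'|[c Cc cE]]|nC] :=
  pselect (C (b' - b) \/ [set - c | c in C] (b' - b)); last first.
- by left; apply: Bac => //; rewrite l0 l1.
- right; split.
    by exists b' => //; exists (l *: c); [exact: Ccone|rewrite convE_right -opprB -cE opprK].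
  by exists b => //; exists ((1 - l) *: c); [exact: Ccone|rewrite convE_left -cE scalerN].
- right; split.
    by exists b => //; exists ((1 - l) *: (b' - b)); [exact: Ccone|rewrite convE_left].
  exists b' => //; exists (l *: (b' - b)); first exact: Ccone.
  by rewrite convE_right -scalerN opprB.
Qed.

Lemma upward_antichain_convex (A : set V) :
  upward C A -> antichain_convex C A -> is_convex A.
Proof.
move=> Aup Aac x y l Ax Ay hl.
by have [//|[/Aup ? _]] := antichain_convex_conv Aac Ax Ay hl.
Qed.

Lemma upward_minksum2 (A B : set V) : upward C A -> upward C (minksum2 A B).
Proof.
move=> Aup _ [_ [a Aa [b Bb <-]] [c Cc <-]].
exists (a + c); first by apply: Aup; exists a => //; exists c.
by exists b => //; rewrite addrAC.
Qed.

Lemma convex_minksum2 (A B : set V) : is_convex A -> upward C A ->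
  antichain_convex C B -> is_convex (minksum2 A B).
Proof.
move=> Acv Aup Bac _ _ l [a Aa [b Bb <-]] [a' Aa' [b' Bb' <-]] hl.
rewrite !scalerDr addrACA.
have Aa'' := Acv _ _ _ Aa Aa' hl.
have [Bb''|[[u Bu [c Cc <-]] _]] := antichain_convex_conv Bac Bb Bb' hl.
  by exists (l *: a + (1 - l) *: a') => //; exists (l *: b + (1 - l) *: b').
exists (l *: a + (1 - l) *: a' + c); last by exists u => //; rewrite [RHS]addrA addrAC.
by apply: Aup; exists (l *: a + (1 - l) *: a') => //; exists c.
Qed.

Lemma antichain_convexN (B : set V) :
  antichain_convex C B -> antichain_convex C [set - b | b in B].
Proof.
move=> Bac _ _ l [b Bb <-] [b' Bb' <-] hl nC.
exists (l *: b + (1 - l) *: b'); last by rewrite opprD -!scalerN.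
have dE : - b' - - b = - (b' - b) by rewrite opprB opprK addrC.
apply: Bac => // -[Cbb'|[c Cc cE]]; apply: nC; rewrite dE.
  by right; exists (b' - b).
by left; rewrite -cE opprK.
Qed.

Lemma minksum1 (X : nat -> set V) : minksum X 1 = X 0%N.
Proof.
apply/seteqP; split; first by move=> _ [_ -> [x Xx <-]]; rewrite add0r.
by move=> x Xx; exists 0 => //; exists x => //; rewrite add0r.
Qed.

Lemma minksum_convex_upward (X : nat -> set V) (m : nat) : (0 < m)%N ->
  upward C (X 0%N) -> (forall i, (i < m)%N -> antichain_convex C (X i)) ->
  is_convex (minksum X m) /\ upward C (minksum X m).
Proof.
case: m => // m _ X0up Xac; elim: m Xac => [|m IH] Xac.
  by rewrite minksum1; split => //; apply: upward_antichain_convex => //; exact: Xac.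
have [cv up] := IH (fun i lt_im => Xac i (ltn_trans lt_im (ltnSn _))).
split; last exact: upward_minksum2.
apply: convex_minksum2 => //; exact: Xac.
Qed.

Lemma minksum_neq0 (X : nat -> set V) (n : nat) :
  (forall j, (j < n)%N -> X j !=set0) -> minksum X n !=set0.
Proof.
elim: n => [|n IH] Xne; first by exists 0.
have [y Yy] := IH (fun j lt_jn => Xne j (ltn_trans lt_jn (ltnSn _))).
by have [b Xb] := Xne n (ltnSn _); exists (y + b); exists y => //; exists b.
Qed.

Lemma sub_minksumE (A : set V) (Y : nat -> set V) (n : nat) :
  [set a - y | a in A & y in minksum Y n.+1] =
  minksum2 [set a - y | a in A & y in minksum Y n] [set - b | b in Y n].
Proof.
apply/seteqP; split.
  move=> _ [a Aa [_ [y Yy [b Yb <-]] <-]].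
  by exists (a - y); [exists a => //; exists y | exists (- b); [exists b|rewrite opprD addrA]].
move=> _ [_ [a Aa [y Yy <-]] [_ [b Yb <-] <-]].
by exists a => //; exists (y + b); [exists y => //; exists b|rewrite opprD addrA].
Qed.

Lemma sub_minksum_convex_upward (A : set V) (Y : nat -> set V) (n : nat) :
  is_convex A -> upward C A -> (forall j, (j < n)%N -> antichain_convex C (Y j)) ->
  is_convex [set a - y | a in A & y in minksum Y n] /\
  upward C [set a - y | a in A & y in minksum Y n].
Proof.
move=> Acv Aup; elim: n => [|n IH] Yac.
  suff -> : [set a - y | a in A & y in minksum Y 0] = A by [].
  apply/seteqP; split; first by move=> _ [a Aa [_ -> <-]]; rewrite subr0.
  by move=> a Aa; exists a => //; exists 0 => //; rewrite subr0.
have [cv up] := IH (fun j lt_jn => Yac j (ltn_trans lt_jn (ltnSn _))).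
rewrite sub_minksumE; split; last exact: upward_minksum2.
by apply: convex_minksum2 => //; exact/antichain_convexN/Yac.
Qed.

End AntichainConvexity.

(* Graphs of linear functionals on subspaces containing w0, normalised by
   f w0 = 1 and nonnegative on K. *)
Record positive_graph (R : realType) (V : lmodType R) (K : set V) (w0 : V)
    (A : set (V * R)) : Prop := PositiveGraph {
  graph_w0 : A (w0, 1);
  graph_add : forall v a u b, A (v, a) -> A (u, b) -> A (v + u, a + b);
  graph_scale : forall t v a, A (v, a) -> A (t *: v, t * a);
  graph_fun : forall v a b, A (v, a) -> A (v, b) -> a = b;
  graph_ge0 : forall v a, A (v, a) -> K v -> 0 <= a }.

Section ConeSeparation.
Variables (R : realType) (V : lmodType R) (K : set V) (w0 : V).
Hypotheses (KD : forall x y, K x -> K y -> K (x + y))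
  (KZ : forall t x, 0 < t -> K x -> K (t *: x))
  (K0 : ~ K 0)
  (Kcore : forall x, exists2 e, 0 < e & K (w0 + e *: x)).

Lemma Kw0 : K w0.
Proof. by have [e _] := Kcore 0; rewrite scaler0 addr0. Qed.

Lemma KZ_inv t x : 0 < t -> K (t *: x) -> K x.
Proof.
move=> t0; have /KZ Kinv : 0 < t^-1 by rewrite invr_gt0.
by move=> /Kinv; rewrite scalerA mulVf ?gt_eqF // scale1r.
Qed.

Lemma positive_graph_line : positive_graph K w0 [set (t *: w0, t) | t in [set: R]].
Proof.
split.
- by exists 1; rewrite ?scale1r.
- by move=> _ _ _ _ [t _ [<- <-]] [s _ [<- <-]]; exists (t + s); rewrite ?scalerDl.
- by move=> s _ _ [t _ [<- <-]]; exists (s * t); rewrite ?scalerA.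
- move=> _ _ _ [t _ [<- <-]] [s _ [e <-]].
  have /eqP : (t - s) *: w0 = 0 by rewrite scalerBl e subrr.
  rewrite scaler_eq0 subr_eq0 => /orP[/eqP //|/eqP w00].
  by have := Kw0; rewrite w00.
- move=> _ _ [t _ [<- <-]] Ktw0; rewrite leNgt; apply/negP => t0; apply: K0.
  have Knw0 : K (- w0).
    by apply: (@KZ_inv (- t)); rewrite ?oppr_gt0 // scaleNr -scalerN opprK.
  by rewrite -(subrr w0); exact: KD Kw0 Knw0.
Qed.

Lemma positive_graph_bigcup (F : set (set (V * R))) :
  total_on F subset -> (forall A, F A -> A !=set0 -> positive_graph K w0 A) ->
  (\bigcup_(A in F) A) !=set0 -> positive_graph K w0 (\bigcup_(A in F) A).
Proof.
move=> Ftot Fpos [p0 [A0 FA0 A0p0]].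
have common p q : (\bigcup_(A in F) A) p -> (\bigcup_(A in F) A) q ->
    exists2 A, F A & [/\ A p, A q & positive_graph K w0 A].
  move=> [A FA Ap] [B FB Bq].
  have [AB|BA] := Ftot _ _ FA FB.
    by exists B => //; split => //; [exact: AB | apply: Fpos => //; exists q].
  by exists A => //; split => //; [exact: BA | apply: Fpos => //; exists p].
split.
- by exists A0 => //; apply: graph_w0; apply: Fpos => //; exists p0.
- move=> v a u b va ub; have [A FA [Ava Aub gA]] := common _ _ va ub.
  by exists A => //; exact (graph_add gA Ava Aub).
- move=> t v a va; have [A FA [Ava _ gA]] := common _ _ va va.
  by exists A => //; exact (graph_scale gA t Ava).
- move=> v a b va vb; have [A FA [Ava Avb gA]] := common _ _ va vb.
  exact (graph_fun gA Ava Avb).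
- move=> v a va Kv; have [A FA [Ava _ gA]] := common _ _ va va.
  exact (graph_ge0 gA Ava Kv).
Qed.

Definition extend_graph (A : set (V * R)) (x : V) (c : R) : set (V * R) :=
  [set p | exists v a t, A (v, a) /\ p = (v + t *: x, a + t * c)].

Section Extension.
Variables (A : set (V * R)) (x : V).
Hypotheses (gA : positive_graph K w0 A) (xA : ~ exists a, A (x, a)).

Lemma graph_opp v a : A (v, a) -> A (- v, - a).
Proof. by move=> /(graph_scale gA (-1)); rewrite scaleN1r mulN1r. Qed.

Lemma graph_w0_scale t : A (t *: w0, t).
Proof. by have := graph_scale gA t (graph_w0 gA); rewrite mulr1. Qed.

Lemma extend_graph_coord t s v a u b : A (v, a) -> A (u, b) ->
  v + t *: x = u + s *: x -> t = s.
Proof.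
move=> Ava Aub e; apply: contrapT => /eqP /negbTE ts; apply: xA.
have ts0 : t - s != 0 by rewrite subr_eq0 ts.
have tsx : (t - s) *: x = u - v.
  by rewrite scalerBl -[t *: x](addKr v) e addrA addrK addrC.
exists ((t - s)^-1 * (b - a)).
have := graph_scale gA (t - s)^-1 (graph_add gA Aub (graph_opp Ava)).
by rewrite -tsx scalerA mulVf // scale1r.
Qed.

Lemma extension_value : exists c,
  (forall v a, A (v, a) -> K (v + x) -> - a <= c) /\
  (forall v a, A (v, a) -> K (v - x) -> c <= a).
Proof.
pose L := [set r | exists v a, [/\ A (v, a), K (v + x) & r = - a]].
pose U := [set r | exists v, A (v, r) /\ K (v - x)].
have LU l u : L l -> U u -> l <= u.
  move=> [v [a [Ava Kvx ->]]] [w [Awu Kwx]].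
  have Kvw : K (v + w).
    by rewrite -(subrK x w) addrCA; exact: KD Kwx Kvx.
  by have := graph_ge0 gA (graph_add gA Ava Awu) Kvw; rewrite -[_ <= u]subr_ge0 opprK addrC.
have core_shift y : exists2 t, 0 < t & K (t *: w0 + y).
  have [e e0 Ke] := Kcore y; exists e^-1; first by rewrite invr_gt0.
  by apply: (KZ_inv e0); rewrite scalerDr scalerA mulfV ?gt_eqF // scale1r.
have [l0 Ll0] : L !=set0.
  have [t _ Kt] := core_shift x.
  by exists (- t), (t *: w0), t; split => //; exact: graph_w0_scale.
have [u0 Uu0] : U !=set0.
  have [t _ Kt] := core_shift (- x).
  by exists t, (t *: w0); split => //; exact: graph_w0_scale.
exists (sup L); split.
  move=> v a Ava Kvx; apply: sup_upper_bound; last by exists v, a.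
  by split; [exists l0 | exists u0 => r Lr; exact: LU].
by move=> v a Ava Kvx; apply: ge_sup; [exists l0 | move=> r Lr; apply: LU Lr _; exists v].
Qed.

Variable c : R.
Hypotheses (Lc : forall v a, A (v, a) -> K (v + x) -> - a <= c)
  (cU : forall v a, A (v, a) -> K (v - x) -> c <= a).

Lemma extend_graph_ge0 v a t : A (v, a) -> K (v + t *: x) -> 0 <= a + t * c.
Proof.
move=> Ava Kvtx; have [t0|t0|t0] := ltgtP t 0.
- have nt0 : 0 < - t by rewrite oppr_gt0.
  have Kv : K ((- t)^-1 *: v - x).
    apply: (KZ_inv nt0); rewrite scalerBr scalerA mulfV ?gt_eqF // scale1r.
    by rewrite scaleNr opprK.
  have := cU (graph_scale gA (- t)^-1 Ava) Kv.
  by rewrite -(ler_pM2l nt0) mulrA mulfV ?gt_eqF // mul1r => h; lra.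
- have Kv : K (t^-1 *: v + x).
    by apply: (KZ_inv t0); rewrite scalerDr scalerA mulfV ?gt_eqF // scale1r.
  have := Lc (graph_scale gA t^-1 Ava) Kv.
  by rewrite -(ler_pM2l t0) mulrN mulrA mulfV ?gt_eqF // mul1r => h; lra.
- by move: Kvtx; rewrite t0 scale0r mul0r !addr0; exact (graph_ge0 gA Ava).
Qed.

Lemma positive_graph_extend : positive_graph K w0 (extend_graph A x c).
Proof.
split.
- by exists w0, 1, 0; rewrite scale0r mul0r !addr0; split => //; exact: graph_w0 gA.
- move=> _ _ _ _ [v1 [a1 [t1 [A1 [-> ->]]]]] [v2 [a2 [t2 [A2 [-> ->]]]]].
  exists (v1 + v2), (a1 + a2), (t1 + t2); split; first exact (graph_add gA A1 A2).
  by rewrite scalerDl mulrDl addrACA [a1 + _ + _]addrACA.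
- move=> s _ _ [v [a [t [Ava [-> ->]]]]].
  exists (s *: v), (s * a), (s * t); split; first exact (graph_scale gA s Ava).
  by rewrite scalerDr scalerA mulrDr mulrA.
- move=> p a1 a2 [v1 [b1 [t1 [A1 [e1 ->]]]]] [v2 [b2 [t2 [A2 [e2 ->]]]]].
  have ev : v1 + t1 *: x = v2 + t2 *: x by rewrite -e1 -e2.
  have tt := extend_graph_coord A1 A2 ev; subst t2.
  move/addIr: ev => vv; rewrite -vv in A2.
  by rewrite (graph_fun gA A1 A2).
- move=> _ _ [v [a [t [Ava [-> ->]]]]]; exact: extend_graph_ge0.
Qed.

Lemma extend_graph_proper : A `<` extend_graph A x c.
Proof.
split; first by move=> [v a] Ava; exists v, a, 0; rewrite scale0r mul0r !addr0.
move=> /(_ (x, c)) xcA; apply: xA; exists c; apply: xcA.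
exists 0, 0, 1; rewrite scale1r mul1r !add0r; split => //.
by have := graph_w0_scale 0; rewrite scale0r.
Qed.

End Extension.

Lemma total_positive_graph :
  exists2 A, positive_graph K w0 A & forall x, exists a, A (x, a).
Proof.
(* Zorn_bigcup also asks for the union of the empty chain. *)
pose P A := A !=set0 -> positive_graph K w0 A.
have [A [PA Amax]] : exists A, P A /\ forall B, A `<` B -> ~ P B.
  apply: Zorn_bigcup => F FP Ftot; exact: positive_graph_bigcup.
have gA : positive_graph K w0 A.
  apply: PA; apply/set0P/negP => /eqP A0; apply: (Amax _ _ (fun=> positive_graph_line)).
  rewrite A0; split => // /(_ (w0, 1)); apply => //.
  by exists 1; rewrite ?scale1r.
exists A => // x; apply: contrapT => xA.
have [c [Lc cU]] := extension_value x gA.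
apply: (Amax _ (extend_graph_proper gA xA c)) => _.
exact: positive_graph_extend.
Qed.

Theorem cone_separation :
  exists f : {linear V -> R^o}, f w0 = 1 /\ forall k, K k -> 0 <= f k.
Proof.
have [A gA Atot] := total_positive_graph.
pose f x := projT1 (cid (Atot x)).
have fA x : A (x, f x) by rewrite /f; case: cid.
have flin : linear_for *%R f.
  move=> a x y; apply: (graph_fun gA (fA _)).
  exact (graph_add gA (graph_scale gA a (fA x)) (fA y)).
pose g : {linear V -> R^o} := HB.pack f (GRing.isLinear.Build _ _ _ _ f flin).
exists g; split => /=.
  exact (graph_fun gA (fA w0) (graph_w0 gA)).
by move=> k Kk; exact (graph_ge0 gA (fA k) Kk).
Qed.

End ConeSeparation.

Lemma convex_core_separation (R : realType) (V : lmodType R) (T : set V) (w0 : V) :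
  is_convex T -> ~ T 0 -> (forall x, exists2 e, 0 < e & T (w0 + e *: x)) ->
  exists f : {linear V -> R^o}, f w0 = 1 /\ forall w, T w -> 0 <= f w.
Proof.
move=> Tcv T0 Tcore.
pose K := [set t *: w | t in [set t : R | 0 < t] & w in T].
have KT w : T w -> K w by exists 1; rewrite /= ?ltr01 //; exists w; rewrite ?scale1r.
have KD x y : K x -> K y -> K (x + y).
  move=> [t1 t10 [w1 Tw1 <-]] [t2 t20 [w2 Tw2 <-]].
  have t0 : 0 < t1 + t2 by rewrite addr_gt0.
  pose l := t1 / (t1 + t2).
  have tl : (t1 + t2) * l = t1 by rewrite /l mulrCA mulfV ?gt_eqF // mulr1.
  have tl' : (t1 + t2) * (1 - l) = t2 by rewrite mulrBr mulr1 tl addrAC subrr add0r.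
  exists (t1 + t2) => //; exists (l *: w1 + (1 - l) *: w2).
    apply: Tcv => //.
    rewrite /l divr_ge0 ?(ltW t10) ?(ltW t0) //=.
    by rewrite ler_pdivrMr // mul1r lerDl ltW.
  by rewrite scalerDr !scalerA tl tl'.
have KZ t x : 0 < t -> K x -> K (t *: x).
  move=> t0 [s s0 [w Tw <-]]; exists (t * s); first exact: mulr_gt0.
  by exists w; rewrite ?scalerA.
have K0 : ~ K 0.
  move=> [t t0 [w Tw /eqP]]; rewrite scaler_eq0 gt_eqF //= => /eqP w0E.
  by apply: T0; rewrite -w0E.
have Kcore x : exists2 e, 0 < e & K (w0 + e *: x).
  by have [e e0 Te] := Tcore x; exists e => //; exact: KT.
have [f [f1 fK]] := cone_separation KD KZ K0 Kcore.
by exists f; split => // w /KT; exact: fK.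
Qed.

Lemma ler_conv_limit (R : realFieldType) (z p q : R) :
  (forall l, 0 < l <= 1 -> z <= l * p + (1 - l) * q) -> z <= q.
Proof.
move=> zle; apply/ler_addgt0Pr => e e0.
pose d := `|p - q|; have d0 : 0 <= d := normr_ge0 _.
have ed0 : 0 < e + d by lra.
pose l := e / (e + d).
have l0 : 0 < l by rewrite divr_gt0.
have l1 : l <= 1 by rewrite ler_pdivrMr // mul1r lerDl.
have ld : l * d <= e.
  have : l * (e + d) = e by rewrite mulfVK ?gt_eqF.
  by have := mulr_ge0 (ltW l0) (ltW e0); rewrite mulrDr; lra.
have := zle l; rewrite l0 l1 => /(_ isT); rewrite mulrBl mul1r addrCA -mulrBr.
have : l * (p - q) <= l * d by rewrite ler_pM2l // ler_norm.
move=> h1 h2; lra.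
Qed.

Section TopologicalLmodule.
Variables (R : realType) (V : topologicalLmodType R).

Lemma affine_continuous (mu : R) (v : V) : continuous (fun z : V => mu *: z + v).
Proof.
move=> z.
apply: (@continuous_comp _ _ _ (fun z : V => mu *: z) (fun w => w + v)).
  apply: (@continuous_comp V (R^o * V)%type V (fun z => (mu, z))
    (fun p => p.1 *: p.2)); last exact: scale_continuous.
  by apply: (@cvg_pair _ _ _ _ (nbhs (mu : R^o))); [exact: cvg_cst|exact: cvg_id].
apply: (@continuous_comp V (V * V)%type V (fun w => (w, v))
  (fun p => p.1 + p.2)); last exact: add_continuous.
by apply: cvg_pair; [exact: cvg_id|exact: cvg_cst].
Qed.

Lemma nbhs_affine (mu : R) (v z : V) (B : set V) :
  nbhs (mu *: z + v) B -> nbhs z [set t | B (mu *: t + v)].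
Proof. exact: affine_continuous. Qed.

Lemma nbhs_core (v : V) (B : set V) :
  nbhs v B -> forall x, exists2 e : R, 0 < e & B (v + e *: x).
Proof.
move=> vB x.
have line : continuous (fun e : R^o => v + e *: x).
  move=> e; apply: (@continuous_comp (R^o) (V * V)%type V (fun e => (v, e *: x))
    (fun p => p.1 + p.2)); last exact: add_continuous.
  apply: cvg_pair; first exact: cvg_cst.
  apply: (@continuous_comp (R^o) (R^o * V)%type V (fun e => (e, x))
    (fun p => p.1 *: p.2)); last exact: scale_continuous.
  by apply: (@cvg_pair _ _ _ _ (nbhs e)); [exact: cvg_id|exact: cvg_cst].
have : nbhs (v + (0 : R^o) *: x) B by rewrite scale0r addr0.
move=> /(line 0) /nbhs_ballP [r r0 hr].
exists (r / 2); first by rewrite divr_gt0.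
apply: hr; rewrite /ball /= sub0r normrN ger0_norm ?divr_ge0 ?ltW //.
by rewrite ltr_pdivrMr // ltr_pMr // ltr1n.
Qed.

Lemma convex_interior_segment (S : set V) a x l : is_convex S ->
  S° a -> S x -> 0 < l <= 1 -> S° (l *: a + (1 - l) *: x).
Proof.
move=> Scv Sa Sx /andP[l0 l1].
have lN0 : l != 0 by rewrite gt_eqF.
pose mu := - (l^-1 * (1 - l)).
have aE : l^-1 *: (l *: a + (1 - l) *: x) + mu *: x = a.
  by rewrite scalerDr !scalerA mulVf // scale1r scaleNr addrK.
have : nbhs (l^-1 *: (l *: a + (1 - l) *: x) + mu *: x) S by rewrite aE.
move=> /nbhs_affine; apply: filterS => z Sz.
have -> : z = l *: (l^-1 *: z + mu *: x) + (1 - l) *: x.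
  by rewrite scalerDr !scalerA mulfV // scale1r mulrN scaleNr mulrA mulfV // mul1r subrK.
by apply: Scv => //; rewrite l1 ltW.
Qed.

Lemma interior_convex (S : set V) : is_convex S -> is_convex S°.
Proof.
move=> Scv x y l Sx Sy /andP[l0 l1].
have [->|lN0] := eqVneq l 0; first by rewrite scale0r add0r subr0 scale1r.
apply: convex_interior_segment Scv Sx (interior_subset Sy) _.
by rewrite lt_def lN0 l0 l1.
Qed.

Lemma interior_upward (C S : set V) : upward C S -> upward C S°.
Proof.
move=> Sup _ [a Sa [c Cc <-]].
have : nbhs (1 *: (a + c) + - c) S by rewrite scale1r addrK.
move=> /nbhs_affine; apply: filterS => z /=; rewrite scale1r => Szc.
by rewrite -(subrK c z); apply: Sup; exists (z - c) => //; exists c.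
Qed.

Lemma linear_bounded_continuous (f : {linear V -> R^o}) (N : set V) :
  nbhs 0 N -> (forall z, N z -> `|f z| <= 1) -> continuous f.
Proof.
move=> N0 fN x; apply/cvgrPdist_le => e e0.
have : nbhs (e^-1 *: x + - (e^-1 *: x)) N by rewrite subrr.
move=> /nbhs_affine; apply: filterS => t /fN.
rewrite linearD linearN !linearZ /= -scalerDr normrZ gtr0_norm ?invr_gt0 //.
by rewrite distrC ler_pdivrMl // mulr1.
Qed.

Lemma interior_separation (S Y : set V) :
  is_convex S -> S° !=set0 -> Y !=set0 -> S° `&` Y = set0 ->
  is_convex [set a - y | a in S° & y in Y] -> lin_separated S Y.
Proof.
move=> Scv [a0 Sa0] [y0 Yy0] SY Tcv.
have T0 : ~ [set a - y | a in S° & y in Y] 0.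
  move=> [a Sa [y Yy /eqP]]; rewrite subr_eq0 => /eqP ayE.
  by rewrite -[False]/(set0 a) -SY; split; rewrite // ayE.
have Tcore x : exists2 e, 0 < e & [set a - y | a in S° & y in Y] (a0 - y0 + e *: x).
  have [e e0 Se] := nbhs_core (nbhs_interior Sa0) x.
  by exists e => //; exists (a0 + e *: x) => //; exists y0; rewrite // addrAC.
have [f [f1 fT]] := convex_core_separation Tcv T0 Tcore.
have fle a y : S° a -> Y y -> f y <= f a.
  by move=> Sa Yy; rewrite -subr_ge0 -linearB; apply: fT; exists a => //; exists y.
have fa0y0 : f a0 - f y0 = 1 by rewrite -linearB.
have fcont : continuous f.
  pose N := [set z | S° (1 *: z + a0) /\ S° ((-1) *: z + a0)].
  apply: (@linear_bounded_continuous _ N).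
    by apply: filterI; apply: nbhs_affine; rewrite scaler0 add0r; exact: nbhs_interior.
  move=> z [/fle/(_ Yy0) h1 /fle/(_ Yy0) h2]; move: h1 h2.
  rewrite !linearD !linearZ /= scale1r scaleN1r ler_norml => h1 h2; apply/andP; split; lra.
have fS x y : S x -> Y y -> f y <= f x.
  move=> Sx Yy; apply: (@ler_conv_limit _ _ (f a0)) => l l01.
  by have := fle _ _ (convex_interior_segment Scv Sa0 Sx l01) Yy; rewrite linearD !linearZ.
exists (\- f); split; [|split].
- by move=> x; apply: cvgN; exact: fcont.
- by exists (a0 - y0); rewrite /= linearB fa0y0 oppr_eq0 oner_neq0.
- apply: ge_ereal_sup => _ [x Sx <-]; apply: le_ereal_inf_tmp => _ [y Yy <-].
  by rewrite lee_fin /= lerN2; exact: fS.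
Qed.

End TopologicalLmodule.

Lemma is_coneN (R : realType) (V : lmodType R) (C : set V) :
  is_cone C -> is_cone [set - c | c in C].
Proof.
by move=> Ccone l _ l0 [c Cc <-]; exists (l *: c); [exact: Ccone | rewrite scalerN].
Qed.

Lemma antichain_convex_coneN (R : realType) (V : lmodType R) (C S : set V) :
  antichain_convex C S -> antichain_convex [set - c | c in C] S.
Proof.
move=> Sac x y l Sx Sy hl nC; apply: Sac => // -[h|h]; apply: nC; last by left.
by right; exists (- (y - x)); [exists (y - x) | rewrite opprK].
Qed.

Lemma downward_upwardN (R : realType) (V : lmodType R) (C S : set V) :
  downward C S -> upward [set - c | c in C] S.
Proof.
by move=> Sd _ [s Ss [_ [c Cc <-] <-]]; apply: Sd; exists s => //; exists c.
Qed.

Lemma minksum_separated (R : realType) (V : topologicalLmodType R) (C : set V)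
    (m n : nat) (X Y : nat -> set V) :
  is_cone C -> (0 < m)%N ->
  (forall i, (i < m)%N -> antichain_convex C (X i)) ->
  (forall j, (j < n)%N -> Y j !=set0 /\ antichain_convex C (Y j)) ->
  (minksum X m)° !=set0 -> (minksum X m)° `&` minksum Y n = set0 ->
  upward C (X 0%N) -> lin_separated (minksum X m) (minksum Y n).
Proof.
move=> Ccone m0 Xac HY Sne SY X0up.
have [Scv Sup] := minksum_convex_upward Ccone m0 X0up Xac.
have [Tcv _] := sub_minksum_convex_upward Ccone (interior_convex Scv)
  (interior_upward Sup) (fun j lt_jn => (HY j lt_jn).2).
apply: interior_separation => //.
by apply: minksum_neq0 => j /HY[].
Qed.

Theorem theorem8 (R : realType) (V : topologicalLmodType R) (C : set V)
  (m n : nat) (X Y : nat -> set V) :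
  is_cone C -> (0 < m)%N -> (0 < n)%N ->
  (forall i, (i < m)%N -> X i !=set0 /\ antichain_convex C (X i)) ->
  (forall j, (j < n)%N -> Y j !=set0 /\ antichain_convex C (Y j)) ->
  (minksum X m)° !=set0 ->
  (minksum X m)° `&` minksum Y n = set0 ->
  (upward C (X 0%N) -> lin_separated (minksum X m) (minksum Y n)) /\
  (downward C (X 0%N) -> lin_separated (minksum X m) (minksum Y n)).
Proof.
move=> Ccone m0 _ HX HY Sne SY; split => [X0up|X0down].
  by apply: minksum_separated Ccone m0 _ HY Sne SY X0up => i /HX[].
apply: (minksum_separated (is_coneN Ccone)) m0 _ _ Sne SY (downward_upwardN X0down).
- by move=> i /HX[_ /antichain_convex_coneN].
- by move=> j /HY[? /antichain_convex_coneN].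
Qed.
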